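(* Let $p=2$ and let $\chi=\mathfrak{Z}_5+2\mathfrak{Z}_{15}$, a character $U_1\to\mathbb{Z}/4\mathbb{Z}$ of type $\langle5,15\rangle$ in reduced form (so $\chi(E_{11})=0$). Then $\chi$ is strictly equivalent to a character $\psi$ in reduced form of type $\langle 5,15\rangle$, i.e. $\psi=\mathfrak{Z}_5+\sum_{10\le j\le15,\,j\text{ odd}}b_j\cdot 2\,\mathfrak{Z}_j$ with $b_j\in\{0,1\}$, $b_{15}=1$, such that $\psi(E_{11})=2$; in particular $\psi\neq\chi$, so the uniqueness of reduced forms in a strict equivalence class fails when $l\ge p$.
   Context: Here $p=2$, $U_1=1+t\mathbb{F}_2[[t]]$, $U_j=1+t^j\mathbb{F}_2[[t]]$, with the $t$-adic topology. The Nottingham group $\mathcal{N}$ over $\mathbb{F}_2$ is the set of power series $u(t)=t(1+c_1t+\cdots)$, $c_i\in\mathbb{F}_2$, under composition. A character is a continuous homomorphism $\chi:U_1\to\mathbb{Z}/4\mathbb{Z}$; $\mathcal{N}$ acts by ${}_u\chi(f(t))=\chi(f(u(t)))$. Characters $\chi,\psi$ are strictly equivalent if $\psi={}_u\chi$ for some $u\in\mathcal{N}$ with $\chi(u(t)/t)=0$. A surjective character has type $\langle l,m\rangle$ where $l$ is the largest $b$ with $\chi(U_b)\not\subset 2\mathbb{Z}/4\mathbb{Z}$ and $m$ the largest $b$ with $\chi(U_b)\ne0$. Put $E_j=1+t^j$; the $E_j$ with $j$ odd form a topological $\mathbb{Z}_2$-basis of $U_1$, and for odd $j$, $\mathfrak{Z}_j$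 is the character with $\mathfrak{Z}_j(E_i)=\delta_{ij}$ for all odd $i$. *)

From HB Require Import structures.
From mathcomp Require Import all_boot all_order all_algebra.
Set Implicit Arguments. Unset Strict Implicit. Unset Printing Implicit Defensive.
Import GRing.Theory.

(* Formal power series over F_2 = bool (addition = addb/xor, mult = andb). *)
Definition series := nat -> bool.

Definition sone : series := fun n => n == 0.

Definition smul (f g : series) : series :=
  fun n => \big[addb/false]_(i < n.+1) (f i && g (n - i)).

Definition spow (f : series) (k : nat) : series := iter k (smul f) sone.

(* composition f(u(t)), meaningful when u(0) = 0 *)
Definition scomp (f u : series) : series :=
  fun n => \big[addb/false]_(k < n.+1) (f k && spow u k n).

Definition inU (j : nat) (f : series) : Prop :=
  f 0 = true /\ forall k, 0 < k < j -> f k = false.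

Definition E (j : nat) : series := fun n => (n == 0) || (n == j).

Definition nottingham (u : series) : Prop := u 0 = false /\ u 1 = true.

Definition sdivt (u : series) : series := fun n => u n.+1.

(* continuous homomorphism U_1 -> Z/4Z (values outside U_1 are irrelevant) *)
Definition is_character (chi : series -> 'Z_4) : Prop :=
  (forall f g, inU 1 f -> inU 1 g -> chi (smul f g) = (chi f + chi g)%R) /\
  (exists n, forall f, inU n f -> chi f = 0%R).

Definition act (u : series) (chi : series -> 'Z_4) : series -> 'Z_4 :=
  fun f => chi (scomp f u).

From HB Require Import structures.
From mathcomp Require Import all_boot all_order all_algebra.
From mathcomp Require Import zify.
From Stdlib Require Import FunctionalExtensionality.
Set Implicit Arguments. Unset Strict Implicit. Unset Printing Implicit Defensive.
Import GRing.Theory.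

(* The witness is u = t + t^4 + t^5 + t^10 + t^12.  Since E_(2m) = E_m^2 in
   characteristic 2, the values of chi on the odd E_i determine chi on every E_k,
   and chi(E_k) = 0 for k >= 16.  As chi vanishes on some U_n, it then vanishes
   on U_16, so chi(f) depends only on f mod t^16: if f lies in U_k and has
   t^k-coefficient 1, then E_k f lies in U_(k+1) and chi(f) = chi(E_k f) - chi(E_k).
   The values of _u chi on the E_i with i odd, i < 16, and chi(u/t) are then finite
   computations with power series truncated mod t^16; for i >= 16, E_i(u) lies in U_16. *)

Lemma big_addb_pick n j (F : nat -> bool) :
  \big[addb/false]_(i < n) ((i == j :> nat) && F i) = (j < n) && F j.
Proof.
case: (ltnP j n) => [jn|nj].
  rewrite (bigD1 (Ordinal jn)) //= eqxx big1 ?addbF // => i ij.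
  by have /negbTE -> : nat_of_ord i != j by apply: contra ij => /eqP ij; apply/eqP/val_inj.
by rewrite big1 // => i _; rewrite ltn_eqF // (leq_trans (ltn_ord i)).
Qed.

Lemma smul_El k f n : (0 < k) ->
  smul (E k) f n = f n (+) ((k <= n) && f (n - k)).
Proof.
move=> k_gt0; have Ek i : E k i = (i == 0) (+) (i == k).
  by rewrite /E; case: (i =P 0) => // ->; rewrite eq_sym gtn_eqF.
rewrite /smul; under eq_bigr => i _ do rewrite Ek andb_addl.
by rewrite big_split /= !(big_addb_pick _ _ (fun i => f (n - i))) subn0 ltnS.
Qed.

Lemma inU1_E k : inU 1 (E k).
Proof. by split => // -[]. Qed.

Lemma inU_leq j k f : (j <= k) -> inU k f -> inU j f.
Proof. by move=> jk [f0 fk]; split=> // i /andP[i0 ij]; rewrite fk // i0 (leq_trans ij). Qed.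

Lemma inU_S k f : inU k f -> f k = false -> inU k.+1 f.
Proof.
move=> [f0 fk] fk0; split=> // i /andP[i0]; rewrite ltnS leq_eqVlt.
by case/predU1P=> [->|ik] //; rewrite fk ?i0.
Qed.

Lemma inU_mulE k f : (0 < k) -> inU k f -> f k -> inU k.+1 (smul (E k) f).
Proof.
move=> k_gt0 [f0 fk] fk1; split; first by rewrite smul_El // f0 leqNgt k_gt0.
move=> i /andP[i0]; rewrite ltnS leq_eqVlt; case/predU1P=> [->|ik].
  by rewrite smul_El // leqnn subnn fk1 f0.
by rewrite smul_El // fk ?i0 // leqNgt ik.
Qed.

Lemma smul_EE m : (0 < m) -> smul (E m) (E m) = E (m + m).
Proof.
move=> m_gt0; apply: functional_extensionality => n; rewrite smul_El // /E.
case: (n == 0) / eqP; case: (n == m) / eqP; case: (m <= n) / leP;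
  case: (n - m == 0) / eqP; case: (n - m == m) / eqP; case: (n == m + m) / eqP;
  move=> /= *; by [] || (exfalso; lia).
Qed.

Lemma inU_scompE i u : inU i (scomp (E i) u).
Proof.
split=> [|n /andP[n_gt0 ni]]; first by rewrite /scomp big_ord1.
have Ei k : (k < n.+1) -> E i k = (k == 0).
  by move=> kn; rewrite /E orbC ltn_eqF // (leq_trans kn ni).
rewrite /scomp (eq_bigr (fun k : 'I_n.+1 => (k == 0 :> nat) && spow u k n)); last first.
  by move=> k _; rewrite Ei.
by rewrite (big_addb_pick _ _ (fun k => spow u k n)) /= /sone gtn_eqF.
Qed.

Section Truncation.
Variable N : nat.

Definition trunc (f : series) : seq bool := mkseq f N.

Definition tsum (n : nat) (F : nat -> bool) : bool :=
  foldr (fun i b => F i (+) b) false (iota 0 n).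

Lemma tsumE n (F : nat -> bool) : \big[addb/false]_(i < n) F i = tsum n F.
Proof. by rewrite -(big_mkord xpredT F) /index_iota subn0 unlock. Qed.

Definition tmul (a b : seq bool) : seq bool :=
  mkseq (fun n => tsum n.+1 (fun i => nth false a i && nth false b (n - i))) N.

Definition tpow (a : seq bool) (k : nat) : seq bool :=
  iter k (tmul a) (trunc sone).

Definition tcomp (f : series) (a : seq bool) : seq bool :=
  mkseq (fun n => tsum n.+1 (fun k => f k && nth false (tpow a k) n)) N.

Lemma eq_trunc f g : (forall n, (n < N) -> f n = g n) -> trunc f = trunc g.
Proof. by move=> fg; apply/eq_in_map => n; rewrite mem_iota => /fg. Qed.

Lemma nth_trunc f n : (n < N) -> nth false (trunc f) n = f n.
Proof. exact: nth_mkseq. Qed.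

Lemma tmul_trunc f g : tmul (trunc f) (trunc g) = trunc (smul f g).
Proof.
apply: eq_trunc => n nN /=; rewrite /smul -tsumE; apply: eq_bigr => i _.
have ni : (i <= n) by rewrite -ltnS.
by rewrite !nth_trunc ?(leq_ltn_trans ni nN) ?(leq_ltn_trans (leq_subr i n) nN).
Qed.

Lemma tpow_trunc u k : tpow (trunc u) k = trunc (spow u k).
Proof. by elim: k => //= k IH; rewrite -/(tpow _ k) IH tmul_trunc. Qed.

Lemma tcomp_trunc f u : tcomp f (trunc u) = trunc (scomp f u).
Proof.
apply: eq_trunc => n nN /=; rewrite /scomp -tsumE; apply: eq_bigr => k _.
by rewrite tpow_trunc nth_trunc.
Qed.
End Truncation.

Local Open Scope ring_scope.

Section Character.
Variables (V : zmodType) (chi : series -> V).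
Hypothesis chi_mul : forall f g, inU 1 f -> inU 1 g -> chi (smul f g) = chi f + chi g.

Lemma char_EE m : (0 < m)%N -> chi (E (m + m)%N) = chi (E m) + chi (E m).
Proof. by move=> m_gt0; rewrite -smul_EE // chi_mul //; apply: inU1_E. Qed.

Lemma char_vanish n0 N : (0 < N)%N ->
  (forall f, inU n0 f -> chi f = 0) -> (forall k, (N <= k)%N -> chi (E k) = 0) ->
  forall f, inU N f -> chi f = 0.
Proof.
move=> N_gt0 chi_Un0 chi_E0.
suff chi_Uk d k f : (n0 - k <= d)%N -> (N <= k)%N -> inU k f -> chi f = 0.
  by move=> f; apply: (chi_Uk n0 N); rewrite ?leq_subr.
elim: d k f => [|d IH] k f dk Nk fU.
  by apply: chi_Un0; apply: inU_leq fU; rewrite -subn_eq0 -leqn0.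
have k_gt0 : (0 < k)%N by apply: leq_trans Nk.
have dSk : (n0 - k.+1 <= d)%N by lia.
case fk: (f k); last exact: (IH k.+1 f dSk (leqW Nk) (inU_S fU fk)).
have := chi_mul (inU1_E k) (inU_leq k_gt0 fU).
by rewrite chi_E0 // add0r (IH k.+1 _ dSk (leqW Nk) (inU_mulE k_gt0 fU fk)).
Qed.

Section Peeling.
Variables (N : nat) (c : nat -> V).

Fixpoint peel_from (fuel k : nat) (l : seq bool) : V :=
  if fuel is fuel'.+1 then
    if nth false l k then peel_from fuel' k.+1 (tmul N (trunc N (E k)) l) - c k
    else peel_from fuel' k.+1 l
  else 0.

Definition peel (l : seq bool) : V := peel_from N.-1 1 l.

Hypothesis chi_E : forall k, (0 < k)%N -> chi (E k) = c k.
Hypothesis chi_UN : forall f, inU N f -> chi f = 0.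

Lemma peel_fromP fuel k f : (fuel + k = N)%N -> (0 < k)%N -> inU k f ->
  chi f = peel_from fuel k (trunc N f).
Proof.
elim: fuel k f => [|fuel IH] k f /= Nk k_gt0 fU; first by rewrite chi_UN // -Nk.
rewrite nth_trunc; last by rewrite -Nk addSn ltnS leq_addl.
have NSk : (fuel + k.+1 = N)%N by rewrite -addSnnS.
case fk: (f k); last exact: IH NSk _ (inU_S fU fk).
rewrite tmul_trunc -(IH _ _ NSk (ltn0Sn k) (inU_mulE k_gt0 fU fk)).
rewrite chi_mul ?chi_E //; [|exact: inU1_E|exact: inU_leq fU].
by rewrite addrC addKr.
Qed.

Lemma peelP f : (0 < N)%N -> inU 1 f -> chi f = peel (trunc N f).
Proof. by move=> N_gt0; apply: peel_fromP; rewrite // addn1 prednK. Qed.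

End Peeling.
End Character.

Definition chiE_val (k : nat) : 'Z_4 :=
  (k == 5)%N%:R + 2 * ((k == 10) || (k == 15))%N%:R.

Lemma chiE_val_odd k : odd k ->
  chiE_val k = (k == 5)%N%:R + 2 * (k == 15)%N%:R.
Proof. by rewrite /chiE_val; case: (eqVneq k 10%N) => [->|]. Qed.

Lemma chiE_val_large k : (16 <= k)%N -> chiE_val k = 0.
Proof.
by move=> k16; rewrite /chiE_val !gtn_eqF ?(leq_trans _ k16) // mulr0 addr0.
Qed.

Lemma chiE_val_double m : chiE_val (m + m)%N = chiE_val m + chiE_val m.
Proof.
have [->|m5] := eqVneq m 5%N; first by apply/eqP.
have [->|m10] := eqVneq m 10%N; first by apply/eqP.
have [->|m15] := eqVneq m 15%N; first by apply/eqP.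
rewrite /chiE_val (negbTE m5) (negbTE m10) (negbTE m15) mulr0 addr0.
have [-> -> ->] : [/\ (m + m == 5)%N = false, (m + m == 10)%N = false
                      & (m + m == 15)%N = false] by split; apply/eqP; lia.
by rewrite mulr0 addr0.
Qed.

Lemma char_E_val (chi : series -> 'Z_4) :
  (forall f g, inU 1 f -> inU 1 g -> chi (smul f g) = chi f + chi g) ->
  (forall i, odd i -> chi (E i) = (i == 5)%N%:R + 2 * (i == 15)%N%:R) ->
  forall k, (0 < k)%N -> chi (E k) = chiE_val k.
Proof.
move=> chi_mul chi_odd; elim/ltn_ind=> k IH k_gt0.
case k_odd: (odd k); first by rewrite chi_odd // chiE_val_odd.
have k_half : k = (k./2 + k./2)%N by rewrite addnn -{1}(odd_double_half k) k_odd.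
have half_gt0 : (0 < k./2)%N by lia.
by rewrite k_half char_EE // chiE_val_double IH //; lia.
Qed.

Definition u0 : series := fun n => n \in [:: 1; 4; 5; 10; 12]%N.

Definition b0 (i : nat) : bool := (i == 11)%N || (i == 15)%N.

Lemma peel_sdivt_u0 : peel 16 chiE_val (trunc 16 (sdivt u0)) = 0.
Proof. by apply/eqP; vm_compute. Qed.

Lemma peel_u0_table : all (fun i =>
    peel 16 chiE_val (tcomp 16 (E i) (trunc 16 u0))
      == (i == 5)%N%:R + 2 * ((10 <= i <= 15)%N && b0 i)%:R)
  [seq i <- iota 0 16 | odd i].
Proof. by vm_compute. Qed.

Theorem mainTheorem9 (chi : series -> 'Z_4)
  (Hchar : is_character chi)
  (Hval : forall i : nat, odd i ->
     chi (E i) = (nat_of_bool (i == 5%N))%:R + 2 * (nat_of_bool (i == 15%N))%:R) :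
  exists u : series,
    nottingham u /\ chi (sdivt u) = 0 /\
    exists b : nat -> bool,
      b 15%N = true /\
      (forall i : nat, odd i ->
         act u chi (E i) =
           (nat_of_bool (i == 5%N))%:R
           + 2 * (nat_of_bool ((10 <= i <= 15)%N && b i))%:R) /\
      act u chi (E 11) = 2 /\
      act u chi <> chi.
Proof.
case: Hchar => chi_mul [n0 chi_Un0].
have chi_E := char_E_val chi_mul Hval.
have chi_U16 : forall f, inU 16 f -> chi f = 0.
  apply: (char_vanish chi_mul _ chi_Un0) => // k k16.
  by rewrite chi_E ?chiE_val_large // (leq_trans _ k16).
have chi_peel f : inU 1 f -> chi f = peel 16 chiE_val (trunc 16 f).
  by apply: (peelP chi_mul chi_E chi_U16).
have act_E i : odd i -> act u0 chi (E i)
    = (i == 5)%N%:R + 2 * ((10 <= i <= 15)%N && b0 i)%:R.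
  move=> i_odd; have i_gt0 : (0 < i)%N by case: i i_odd.
  rewrite /act; case: (ltnP i 16) => [i_lt16|i_ge16].
    rewrite chi_peel -?tcomp_trunc; last exact: inU_leq i_gt0 (inU_scompE i u0).
    by apply/eqP; apply: (allP peel_u0_table); rewrite mem_filter i_odd mem_iota.
  rewrite chi_U16; last exact: inU_leq i_ge16 (inU_scompE i u0).
  have [-> ->] : (i == 5)%N = false /\ (i <= 15)%N = false by split; apply/negbTE; lia.
  by rewrite andbF /= mulr0n mulr0 addr0.
have act_E11 : act u0 chi (E 11) = 2 by rewrite act_E //; apply: val_inj.
exists u0; split=> //; split; first by rewrite chi_peel ?peel_sdivt_u0 //; split=> // -[].
exists b0; do 3!split=> //.
by move=> act_chi; move: (Hval 11 isT); rewrite -act_chi act_E11.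
Qed.
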